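(* For every $n\in\{0,1,2,\dots\}$, \[ {}_2F_1\Big(n+\tfrac12,n+1;n+\tfrac32;-1\Big)=\frac{(2n+1)!!}{(2n)!!}\,\frac{\pi}{4}+\frac{2n+1}{2^{2n}}\sum_{k=1}^{n}(-1)^k\binom{2n-k}{n}\frac{2^{k/2}}{k}\sin\frac{3k\pi}{4}. \]
   Context: ${}_2F_1(\alpha,\beta;\gamma;z)=\sum_{n\ge0}\frac{(\alpha)_n(\beta)_n}{(\gamma)_n}\frac{z^n}{n!}$ is Gauss' hypergeometric function, with $(a)_n=a(a+1)\cdots(a+n-1)$. Its value at $-1$ is that of its analytic continuation to $\mathbb{C}\setminus(1,\infty)$. $(2n)!!=2^nn!$ with $0!!=1$, and $(2n+1)!!=1\cdot3\cdots(2n+1)$. An empty sum is $0$. *)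

From Stdlib Require Import Reals Arith.
From Coquelicot Require Import Coquelicot.
Open Scope R_scope.

Fixpoint poch (a : R) (n : nat) : R :=
  match n with
  | O => 1
  | S m => poch a m * (a + INR m)
  end.

Definition hyp2F1_series (a b c x : R) : R :=
  Series (fun n => poch a n * poch b n / poch c n * x ^ n / INR (Factorial.fact n)).

Fixpoint dfact (m : nat) : nat :=
  match m with
  | O => 1%nat
  | S O => 1%nat
  | S ((S p) as q) => (m * dfact p)%nat
  end.

From Stdlib Require Import Reals Lia Lra.
From Coquelicot Require Import Coquelicot.
Open Scope R_scope.

(* With a = n + 1/2, the series F(x) = 2F1(a, n+1; a+1; x) solves
   x F'(x) = a ((1 - x)^-(n+1) - F(x)), which integrates to
   s^(2n+1) F(-s^2) = (2n+1) Q_n(s) with Q_n(s) = int_0^s t^(2n) / (1 + t^2)^(n+1) dt.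
   The right-hand side is continuous at s = 1, so the value at -1 is (2n+1) Q_n(1).
   Integrating by parts, Q_(n+1)(1) = ((2n+1) Q_n(1) - 2^-(n+1)) / (2n+2) and Q_0(1) = pi/4;
   this yields Q_n(1) = (2n-1)!!/(2n)!! pi/4 + S_n / 4^n, because
   S_n = sum_k C(2n-k, n) Im((1-i)^k) / k obeys (2n+2) S_(n+1) = 4 (2n+1) S_n - 2^(n+1).
   That binomial recurrence follows from Pascal's rule and
   sum_k C(2n-k, n) (Re + Im)((1-i)^k) = 2^n.  Finally
   (-1)^k 2^(k/2) sin(3k pi/4) = Im((1-i)^k). *)

(** * Binomial sums against the powers of 1 - i *)

Lemma sum_n_m_lin_R (a b : R) (u v : nat -> R) (m p : nat) :
  sum_n_m (fun k => a * u k + b * v k) m p = a * sum_n_m u m p + b * sum_n_m v m p.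
Proof.
  rewrite <- (sum_n_m_mult_l a u), <- (sum_n_m_mult_l b v).
  exact (sum_n_m_plus _ _ m p).
Qed.

Lemma sum_n_m_scal_R (a : R) (u : nat -> R) (m p : nat) :
  sum_n_m (fun k => a * u k) m p = a * sum_n_m u m p.
Proof. exact (sum_n_m_mult_l a u m p). Qed.

Lemma sum_n_m_ext_R (u v : nat -> R) (m p : nat) :
  (forall k, (m <= k <= p)%nat -> u k = v k) -> sum_n_m u m p = sum_n_m v m p.
Proof. exact (sum_n_m_ext_loc u v m p). Qed.

Lemma binom_eq_fact (r j : nat) :
  Binomial.C (r + j) r
  = INR (Factorial.fact (r + j)) / (INR (Factorial.fact r) * INR (Factorial.fact j)).
Proof. unfold Binomial.C. now replace (r + j - r)%nat with j by lia. Qed.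

Lemma binom_absorb (m r : nat) : (r <= m)%nat ->
  INR (S r) * Binomial.C (S m) (S r) = INR (S m) * Binomial.C m r.
Proof.
  intros Hrm. replace m with (r + (m - r))%nat by lia.
  replace (S (r + (m - r))) with (S r + (m - r))%nat by lia.
  rewrite !binom_eq_fact. replace (S r + (m - r))%nat with (S (r + (m - r))) by lia.
  rewrite !fact_simpl, !mult_INR.
  pose proof (INR_fact_neq_0 r). pose proof (INR_fact_neq_0 (m - r)).
  pose proof (INR_fact_neq_0 (r + (m - r))).
  field. split; [|split]; auto. apply not_0_INR. lia.
Qed.

Lemma binom_central_succ (n : nat) :
  Binomial.C (S (S (2 * n))) (S n) = 2 * Binomial.C (S (2 * n)) n.
Proof.
  rewrite <- pascal by lia.
  rewrite (pascal_step1 (S (2 * n)) (S n)) by lia.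
  replace (S (2 * n) - S n)%nat with n by lia. ring.
Qed.

Lemma binom_coef_rec (m k : nat) : (k <= S m)%nat ->
  (2 * INR (S m) + 2) * Binomial.C (2 * S (S m) - k) (S (S m))
  - 4 * (2 * INR (S m) + 1) * Binomial.C (2 * S m - k) (S m)
  = 2 * INR k * (INR k - 1) / INR (S m) * Binomial.C (2 * S m - k) m.
Proof.
  intros Hk. set (j := (S m - k)%nat).
  replace (2 * S (S m) - k)%nat with (S (S m) + S j)%nat by lia.
  replace (2 * S m - k)%nat with (S m + j)%nat by lia.
  rewrite (binom_eq_fact (S m) j).
  replace (S m + j)%nat with (m + S j)%nat by lia.
  rewrite !binom_eq_fact.
  replace (INR k) with (INR (S m) - INR j) by (unfold j; rewrite minus_INR by lia; ring).
  replace (S (S m) + S j)%nat with (S (S (S (m + j)))) by lia.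
  replace (m + S j)%nat with (S (m + j)) by lia.
  rewrite !fact_simpl, !mult_INR, !S_INR, plus_INR.
  pose proof (INR_fact_neq_0 m). pose proof (INR_fact_neq_0 j).
  pose proof (INR_fact_neq_0 (m + j)). pose proof (pos_INR m). pose proof (pos_INR j).
  field. repeat split; lra.
Qed.

(* The range 0 <= k <= N - r is the support of C(N - k, r): beyond it [Binomial.C]
   is not 0 but a junk quotient of factorials. *)
Definition bsum (N r : nat) (v : nat -> R) : R :=
  sum_n_m (fun k => Binomial.C (N - k) r * v k) 0 (N - r).

Lemma bsum_ext (N r : nat) (v1 v2 : nat -> R) :
  (forall k, v1 k = v2 k) -> bsum N r v1 = bsum N r v2.
Proof. intros E. apply sum_n_m_ext_R. intros k _. now rewrite E. Qed.

Lemma bsum_lin (N r : nat) (a b : R) (v1 v2 : nat -> R) :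
  bsum N r (fun k => a * v1 k + b * v2 k) = a * bsum N r v1 + b * bsum N r v2.
Proof.
  unfold bsum. rewrite <- sum_n_m_lin_R. apply sum_n_m_ext_R. intros k _. ring.
Qed.

Lemma bsum_split_last (N r : nat) (v : nat -> R) : (r < N)%nat ->
  bsum N r v = sum_n_m (fun k => Binomial.C (N - k) r * v k) 0 (N - S r) + v (N - r)%nat.
Proof.
  intros HrN. unfold bsum.
  replace (N - r)%nat with (S (N - S r)) by lia.
  rewrite sum_n_Sm by lia.
  replace (N - S (N - S r))%nat with r by lia.
  rewrite C_n_n. unfold plus; simpl. ring.
Qed.

Lemma bsum_shift (N r : nat) (v : nat -> R) : (r <= N)%nat ->
  bsum (S N) r v = Binomial.C (S N) r * v O + bsum N r (fun k => v (S k)).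
Proof.
  intros HrN. unfold bsum.
  replace (S N - r)%nat with (S (N - r)) by lia.
  rewrite sum_Sn_m by lia. rewrite <- sum_n_m_S. reflexivity.
Qed.

Lemma bsum_pascal (N r : nat) (v : nat -> R) : (r < N)%nat ->
  bsum (S N) (S r) v = bsum N (S r) v + bsum N r v.
Proof.
  intros HrN. unfold bsum. simpl (S N - S r)%nat.
  replace (N - r)%nat with (S (N - S r)) by lia.
  rewrite !sum_n_Sm by lia.
  replace (S N - S (N - S r))%nat with (S r) by lia.
  replace (N - S (N - S r))%nat with r by lia.
  rewrite !C_n_n.
  replace (sum_n_m (fun k => Binomial.C (S N - k) (S r) * v k) 0 (N - S r))
    with (sum_n_m (fun k => 1 * (Binomial.C (N - k) (S r) * v k)
                            + 1 * (Binomial.C (N - k) r * v k)) 0 (N - S r)).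
  - rewrite sum_n_m_lin_R. unfold plus; simpl. ring.
  - apply sum_n_m_ext_R. intros k Hk.
    replace (S N - k)%nat with (S (N - k)) by lia.
    rewrite <- pascal by lia. ring.
Qed.

Lemma bsum_weighted (N r : nat) (v : nat -> R) : (r <= N)%nat ->
  bsum N r (fun k => INR k * v k)
  = INR (S N) * bsum N r v - INR (S r) * bsum (S N) (S r) v.
Proof.
  intros HrN. unfold bsum. simpl (S N - S r)%nat.
  replace (INR (S N) * _ - _) with
    (sum_n_m (fun k => INR (S N) * (Binomial.C (N - k) r * v k)
                       + - INR (S r) * (Binomial.C (S N - k) (S r) * v k)) 0 (N - r) : R)
    by (rewrite sum_n_m_lin_R; ring).
  apply sum_n_m_ext_R. intros k Hk.
  replace (S N - k)%nat with (S (N - k)) by lia.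
  replace (- INR (S r) * (Binomial.C (S (N - k)) (S r) * v k))
    with (- (INR (S r) * Binomial.C (S (N - k)) (S r)) * v k) by ring.
  rewrite binom_absorb by lia.
  rewrite !S_INR, minus_INR by lia. ring.
Qed.

(* [(zre k, zim k)] are the real and imaginary parts of (1 - i)^k. *)
Fixpoint zpow (k : nat) : R * R :=
  match k with
  | O => (1, 0)
  | S k => let (a, b) := zpow k in (a + b, b - a)
  end.

Definition zre (k : nat) : R := fst (zpow k).

Definition zim (k : nat) : R := snd (zpow k).

Lemma zre_S (k : nat) : zre (S k) = zre k + zim k.
Proof. unfold zre, zim; simpl; now destruct (zpow k). Qed.

Lemma zim_S (k : nat) : zim (S k) = zim k - zre k.
Proof. unfold zre, zim; simpl; now destruct (zpow k). Qed.

Lemma zpow_polar (k : nat) :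
  (-1) ^ k * Rpower 2 (INR k / 2) * cos (3 * INR k * PI / 4) = zre k /\
  (-1) ^ k * Rpower 2 (INR k / 2) * sin (3 * INR k * PI / 4) = zim k.
Proof.
  induction k as [|k [IHre IHim]].
  - unfold zre, zim; simpl.
    replace (0 / 2) with 0 by field. replace (3 * 0 * PI / 4) with 0 by field.
    rewrite Rpower_O, cos_0, sin_0 by lra. split; ring.
  - rewrite zre_S, zim_S, <- IHre, <- IHim, S_INR.
    replace ((INR k + 1) / 2) with (INR k / 2 + / 2) by field.
    rewrite Rpower_plus, Rpower_sqrt by lra.
    replace (3 * (INR k + 1) * PI / 4) with (3 * INR k * PI / 4 + (PI - PI / 4)) by field.
    rewrite sin_plus, cos_plus, sin_PI_x, Rtrigo_facts.cos_pi_minus, sin_PI4, cos_PI4.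
    assert (Hsqrt2 : sqrt 2 * sqrt 2 = 2) by (apply sqrt_sqrt; lra).
    assert (0 < sqrt 2) by (apply sqrt_lt_R0; lra).
    simpl pow. split; field_simplify; try lra; rewrite Hsqrt2; field.
Qed.

Lemma bsum_zre_shift (N r : nat) : (r <= N)%nat ->
  bsum (S N) r zre = Binomial.C (S N) r + bsum N r zre + bsum N r zim.
Proof.
  intros HrN. rewrite bsum_shift by exact HrN.
  rewrite (bsum_ext _ _ _ (fun k => 1 * zre k + 1 * zim k)), bsum_lin
    by (intros k; rewrite zre_S; ring).
  unfold zre at 1; simpl. ring.
Qed.

Lemma bsum_zim_shift (N r : nat) : (r <= N)%nat ->
  bsum (S N) r zim = bsum N r zim - bsum N r zre.
Proof.
  intros HrN. rewrite bsum_shift by exact HrN.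
  rewrite (bsum_ext _ _ _ (fun k => 1 * zim k + (-1) * zre k)), bsum_lin
    by (intros k; rewrite zim_S; ring).
  unfold zim at 1; simpl. ring.
Qed.

Lemma bsum_zre_add_zim (n : nat) : bsum (2 * n) n zre + bsum (2 * n) n zim = 2 ^ n.
Proof.
  induction n as [|n IH].
  - unfold bsum; simpl. rewrite !sum_n_n, C_n_n. unfold zre, zim; simpl. ring.
  - replace (2 * S n)%nat with (S (S (2 * n))) by lia.
    pose proof (bsum_zre_shift (2 * n) n ltac:(lia)).
    pose proof (bsum_zim_shift (2 * n) n ltac:(lia)).
    pose proof (bsum_zre_shift (S (2 * n)) (S n) ltac:(lia)).
    pose proof (bsum_zim_shift (S (2 * n)) (S n) ltac:(lia)).
    pose proof (bsum_pascal (S (2 * n)) n zre ltac:(lia)).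
    pose proof (bsum_pascal (S (2 * n)) n zim ltac:(lia)).
    pose proof (binom_central_succ n).
    simpl pow. lra.
Qed.

Lemma bsum_zim_moment (m : nat) :
  bsum (2 * S m) m (fun k => (INR k - 1) * zim k) = - INR (S m) * 2 ^ S m.
Proof.
  rewrite (bsum_ext _ _ _ (fun k => 1 * (INR k * zim k) + (-1) * zim k)), bsum_lin
    by (intros k; ring).
  rewrite bsum_weighted by lia.
  pose proof (bsum_zim_shift (2 * S m) (S m) ltac:(lia)) as Hshift.
  pose proof (bsum_pascal (2 * S m) m zim ltac:(lia)) as Hpascal.
  assert (HY : bsum (2 * S m) m zim = - bsum (2 * S m) (S m) zre) by lra.
  rewrite Hshift, HY, <- (bsum_zre_add_zim (S m)).
  rewrite S_INR, mult_INR. simpl (INR 2). ring.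
Qed.

(* The k = 0 term, where [/ INR 0] is junk, vanishes because [zim 0 = 0]. *)
Definition im_sum (n : nat) : R := bsum (2 * n) n (fun k => zim k / INR k).

Lemma sum_binom_coef_rec (m : nat) (v : nat -> R) : v O = 0 ->
  (2 * INR (S m) + 2)
    * sum_n_m (fun k => Binomial.C (2 * S (S m) - k) (S (S m)) * (v k / INR k)) 0 (S m)
  - 4 * (2 * INR (S m) + 1)
    * sum_n_m (fun k => Binomial.C (2 * S m - k) (S m) * (v k / INR k)) 0 (S m)
  = 2 / INR (S m) * sum_n_m (fun k => Binomial.C (2 * S m - k) m * ((INR k - 1) * v k)) 0 (S m).
Proof.
  intros Hv0.
  rewrite Rminus_def, Ropp_mult_distr_l, <- sum_n_m_lin_R, <- sum_n_m_scal_R.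
  apply sum_n_m_ext_R. intros k Hk.
  transitivity (v k / INR k * ((2 * INR (S m) + 2) * Binomial.C (2 * S (S m) - k) (S (S m))
                 - 4 * (2 * INR (S m) + 1) * Binomial.C (2 * S m - k) (S m))); [ring|].
  rewrite binom_coef_rec by lia.
  destruct k as [|k].
  - rewrite Hv0. unfold Rdiv. ring.
  - assert (INR (S k) <> 0) by (apply not_0_INR; lia).
    assert (INR (S m) <> 0) by (apply not_0_INR; lia).
    field. split; assumption.
Qed.

Lemma im_sum_rec (n : nat) :
  (2 * INR n + 2) * im_sum (S n) = 4 * (2 * INR n + 1) * im_sum n - 2 ^ S n.
Proof.
  destruct n as [|m].
  - unfold im_sum, bsum; simpl.
    rewrite sum_n_Sm, !sum_n_n by lia. unfold plus, zim, Binomial.C; simpl.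
    rewrite Rdiv_0_l. field.
  - pose proof (sum_binom_coef_rec m zim eq_refl) as Hterms.
    pose proof (bsum_zim_moment m) as Hmoment.
    rewrite bsum_split_last in Hmoment by lia.
    unfold im_sum. rewrite (bsum_split_last (2 * S (S m))) by lia. unfold bsum.
    replace (2 * S (S m) - S (S (S m)))%nat with (S m) by lia.
    replace (2 * S (S m) - S (S m))%nat with (S (S m)) by lia.
    replace (2 * S m - S m)%nat with (S m) in * by lia.
    replace (2 * S m - m)%nat with (S (S m)) in Hmoment by lia.
    set (A := sum_n_m (fun k => Binomial.C (2 * S (S m) - k) _ * _) 0 (S m)) in *.
    set (B := sum_n_m (fun k => Binomial.C (2 * S m - k) (S m) * _) 0 (S m)) in *.
    set (I := sum_n_m (fun k => Binomial.C (2 * S m - k) m * _) 0 (S m)) in *.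
    assert (HI : I = - INR (S m) * 2 ^ S m - INR (S m) * zim (S (S m)))
      by (rewrite S_INR in Hmoment; lra).
    assert (HA : (2 * INR (S m) + 2) * A = 4 * (2 * INR (S m) + 1) * B + 2 / INR (S m) * I)
      by lra.
    rewrite Rmult_plus_distr_l, HA, HI, (S_INR (S m)).
    assert (INR (S m) <> 0) by (apply not_0_INR; lia).
    pose proof (pos_INR (S m)).
    simpl pow. field. split; lra.
Qed.

(** * The integrals Q n at s = 1 *)

Lemma dfact_pos (p : nat) : (0 < dfact p)%nat.
Proof.
  induction p as [p IH] using Wf_nat.lt_wf_ind.
  destruct p as [|[|p]]; simpl; [lia | lia |].
  specialize (IH p ltac:(lia)). lia.
Qed.

Definition dfact_ratio (n : nat) : R := INR (dfact (2 * n + 1)) / INR (dfact (2 * n)).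

Lemma dfact_ratio_S (n : nat) :
  dfact_ratio (S n) = (2 * INR n + 3) / (2 * INR n + 2) * dfact_ratio n.
Proof.
  unfold dfact_ratio.
  replace (2 * S n + 1)%nat with (S (S (2 * n + 1))) by lia.
  replace (2 * S n)%nat with (S (S (2 * n))) by lia.
  change (dfact (S (S ?p))) with (S (S p) * dfact p)%nat.
  rewrite !mult_INR.
  replace (INR (S (S (2 * n + 1)))) with (2 * INR n + 3)
    by (rewrite !S_INR, plus_INR, mult_INR; simpl; ring).
  replace (INR (S (S (2 * n)))) with (2 * INR n + 2)
    by (rewrite !S_INR, mult_INR; simpl; ring).
  assert (0 < INR (dfact (2 * n))) by (apply lt_0_INR, dfact_pos).
  pose proof (pos_INR n). field. lra.
Qed.

(* Q n s = int_0^s t^(2n) / (1 + t^2)^(n+1) dt, defined through the integration by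
   parts recursion so that no integral is needed; see [is_derive_Q]. *)
Fixpoint Q (n : nat) (s : R) : R :=
  match n with
  | O => atan s
  | S m => ((2 * INR m + 1) * Q m s - s ^ (2 * m + 1) / (1 + s ^ 2) ^ S m) / (2 * INR m + 2)
  end.

Lemma Q_at_0 (n : nat) : Q n 0 = 0.
Proof.
  induction n as [|n IH]; simpl.
  - exact atan_0.
  - rewrite IH, pow_i by lia. unfold Rdiv. ring.
Qed.

Lemma is_derive_Q (n : nat) (s : R) :
  is_derive (Q n) s (s ^ (2 * n) / (1 + s ^ 2) ^ S n).
Proof.
  assert (Hpos : forall p, 0 < (1 + s ^ 2) ^ p) by (intros p; apply pow_lt; nra).
  induction n as [|n IH].
  - replace (s ^ (2 * 0) / (1 + s ^ 2) ^ 1) with (/ (1 + s²))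
      by (unfold Rsqr; simpl; field; nra).
    apply is_derive_atan.
  - change (Q (S n)) with (fun s => ((2 * INR n + 1) * Q n s
                - s ^ (2 * n + 1) / (1 + s ^ 2) ^ S n) / (2 * INR n + 2)).
    assert (Hex : ex_derive (Q n) s) by (eexists; exact IH).
    auto_derive.
    + repeat split; auto. exact (Rgt_not_eq _ _ (Hpos (S n))).
    + change (fun x => Q n x) with (Q n). rewrite (is_derive_unique _ _ _ IH).
      replace (match n with 0%nat => 1 | S _ => INR n + 1 end) with (INR (S n))
        by (destruct n; simpl; ring).
      replace (n + (n + 0) + 1)%nat with (S (2 * n)) by lia.
      replace (2 * S n)%nat with (S (S (2 * n))) by lia.
      rewrite Nat.pred_succ, S_INR, mult_INR, (S_INR n).
      pose proof (Hpos n). pose proof (Hpos 1%nat). pose proof (pos_INR n).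
      simpl pow in *. simpl (INR 2). field. repeat split; lra.
Qed.

Lemma Q_at_1 (n : nat) :
  (2 * INR n + 1) * Q n 1 = dfact_ratio n * (PI / 4) + (2 * INR n + 1) * im_sum n / 4 ^ n.
Proof.
  induction n as [|n IH].
  - unfold dfact_ratio, im_sum, bsum. simpl. rewrite sum_n_n, atan_1.
    unfold zim; simpl. rewrite Rdiv_0_l. field.
  - cbn [Q]. rewrite dfact_ratio_S, S_INR.
    pose proof (im_sum_rec n) as Hrec. pose proof (pos_INR n).
    assert (Hpow : 0 < 2 ^ n) by (apply pow_lt; lra).
    assert (H4 : 4 ^ n = 2 ^ n * 2 ^ n) by (rewrite <- Rpow_mult_distr; f_equal; ring).
    replace (im_sum (S n)) with ((4 * (2 * INR n + 1) * im_sum n - 2 ^ S n) / (2 * INR n + 2))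
      by (rewrite <- Hrec; field; lra).
    replace (1 + 1 ^ 2) with 2 by ring.
    rewrite pow1, IH. simpl pow. rewrite H4. field. lra.
Qed.

(** * The hypergeometric series on (-1, 1) *)

Lemma poch_pos (a : R) (k : nat) : 0 < a -> 0 < poch a k.
Proof.
  intros Ha. induction k as [|k IH]; simpl; [lra|].
  apply Rmult_lt_0_compat; [exact IH|]. pose proof (pos_INR k). lra.
Qed.

Lemma poch_shift (a : R) (k : nat) : poch a k * (a + INR k) = a * poch (a + 1) k.
Proof.
  induction k as [|k IH]; [simpl; ring|].
  cbn [poch]. rewrite S_INR, IH. ring.
Qed.

Lemma is_lim_seq_ratio_INR (a b : R) : 0 < b ->
  is_lim_seq (fun k => (a + INR k) / (b + INR k)) 1.
Proof.
  intros Hb.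
  assert (Hinf : is_lim_seq (fun k => b + INR k) p_infty).
  { apply is_lim_seq_le_p_loc with INR; [exists 0%nat; intros; lra | apply is_lim_seq_INR]. }
  assert (Hinv : is_lim_seq (fun k => / (b + INR k)) 0).
  { replace (Finite 0) with (Rbar_inv p_infty) by reflexivity.
    apply is_lim_seq_inv; [exact Hinf | discriminate]. }
  assert (H : is_lim_seq (fun k => 1 + (a - b) * / (b + INR k)) (1 + (a - b) * 0)).
  { apply is_lim_seq_plus'; [apply is_lim_seq_const|].
    apply is_lim_seq_mult'; [apply is_lim_seq_const | exact Hinv]. }
  rewrite Rmult_0_r, Rplus_0_r in H.
  eapply is_lim_seq_ext; [|exact H].
  intros k. simpl. pose proof (pos_INR k). field. lra.
Qed.

Lemma CV_radius_le_abs (a b : nat -> R) :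
  (forall k, Rabs (b k) <= Rabs (a k)) -> Rbar_le (CV_radius a) (CV_radius b).
Proof.
  intros Hab. eapply is_lub_Rbar_subset; [| apply CV_radius_bounded ..].
  intros r [M HM]. exists M. intros k.
  eapply Rle_trans; [|apply (HM k)].
  rewrite !Rabs_mult. apply Rmult_le_compat_r; [apply Rabs_pos | apply Hab].
Qed.

Lemma is_derive_zero_const (f : R -> R) (a b : R) :
  (forall x, a < x < b -> is_derive f x 0) ->
  forall x y, a < x < b -> a < y < b -> f x = f y.
Proof.
  intros Hd x y Hx Hy.
  assert (Hin : forall z, Rmin y x <= z <= Rmax y x -> a < z < b).
  { intros z Hz. unfold Rmin, Rmax in Hz. destruct (Rle_dec y x); lra. }
  destruct (MVT_gen f y x (fun _ => 0)) as [c [_ Hc]].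
  - intros z Hz. apply Hd, Hin. lra.
  - intros z Hz. apply continuity_pt_filterlim, (ex_derive_continuous f z).
    eexists. apply Hd, Hin, Hz.
  - lra.
Qed.

Section Hypergeometric.

Variable n : nat.

Definition inv_pow_coef (k : nat) : R := poch (INR n + 1) k / INR (Factorial.fact k).

Definition hyp_coef (k : nat) : R := (INR n + /2) / (INR n + /2 + INR k) * inv_pow_coef k.

Lemma inv_pow_coef_pos (k : nat) : 0 < inv_pow_coef k.
Proof.
  apply Rdiv_lt_0_compat; [apply poch_pos; pose proof (pos_INR n); lra|].
  apply lt_0_INR, Factorial.lt_O_fact.
Qed.

Lemma inv_pow_coef_S (k : nat) :
  INR (S k) * inv_pow_coef (S k) = (INR n + 1 + INR k) * inv_pow_coef k.
Proof.
  unfold inv_pow_coef. cbn [poch]. rewrite fact_simpl, mult_INR.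
  pose proof (INR_fact_neq_0 k). assert (INR (S k) <> 0) by (apply not_0_INR; lia).
  field. split; assumption.
Qed.

Lemma CV_radius_inv_pow_coef : CV_radius inv_pow_coef = 1.
Proof.
  rewrite <- Rinv_1. apply CV_radius_finite_DAlembert; [|lra|].
  - intros k. apply Rgt_not_eq, inv_pow_coef_pos.
  - eapply is_lim_seq_ext; [|apply (is_lim_seq_ratio_INR (INR n + 1) 1); lra].
    intros k. pose proof (inv_pow_coef_S k) as Hk. pose proof (inv_pow_coef_pos k).
    pose proof (pos_INR n). pose proof (pos_INR k). rewrite S_INR in Hk.
    replace (inv_pow_coef (S k) / inv_pow_coef k) with ((INR n + 1 + INR k) / (1 + INR k)).
    + symmetry. apply Rabs_pos_eq, Rlt_le, Rdiv_lt_0_compat; lra.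
    + apply (Rmult_eq_reg_l ((1 + INR k) * inv_pow_coef k)); [|nra].
      rewrite (Rplus_comm 1 (INR k)).
      transitivity ((INR n + 1 + INR k) * inv_pow_coef k); [field; lra|].
      rewrite <- Hk. field. lra.
Qed.

Lemma hyp_coef_factor_bounds (k : nat) :
  0 < (INR n + /2) / (INR n + /2 + INR k) <= 1.
Proof.
  pose proof (pos_INR n). pose proof (pos_INR k). split.
  - apply Rdiv_lt_0_compat; lra.
  - apply (Rdiv_le_1 (INR n + /2)); lra.
Qed.

Lemma CV_radius_hyp_coef : Rbar_le 1 (CV_radius hyp_coef).
Proof.
  rewrite <- CV_radius_inv_pow_coef. apply CV_radius_le_abs. intros k.
  pose proof (hyp_coef_factor_bounds k). pose proof (inv_pow_coef_pos k).
  unfold hyp_coef. rewrite !Rabs_pos_eq by nra. nra.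
Qed.

Lemma hyp2F1_series_hyp_coef (x : R) :
  hyp2F1_series (INR n + /2) (INR n + 1) (INR n + 3/2) x = PSeries hyp_coef x.
Proof.
  apply Series_ext. intros k. unfold hyp_coef, inv_pow_coef.
  pose proof (poch_shift (INR n + /2) k) as Hshift.
  replace (INR n + /2 + 1) with (INR n + 3/2) in Hshift by field.
  pose proof (pos_INR n). pose proof (pos_INR k). pose proof (INR_fact_neq_0 k).
  assert (0 < poch (INR n + 3/2) k) by (apply poch_pos; lra).
  apply (Rmult_eq_reg_l (poch (INR n + 3/2) k * (INR n + /2 + INR k))); [|nra].
  unfold scal; simpl; unfold mult; simpl.
  transitivity ((poch (INR n + /2) k * (INR n + /2 + INR k)) * poch (INR n + 1) k
                / INR (Factorial.fact k) * x ^ k); [field; lra|].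
  rewrite Hshift. field. lra.
Qed.

Lemma in_disk_inv_pow_coef (y : R) : Rabs y < 1 -> Rbar_lt (Rabs y) (CV_radius inv_pow_coef).
Proof. intros Hy. now rewrite CV_radius_inv_pow_coef. Qed.

Lemma in_disk_hyp_coef (y : R) : Rabs y < 1 -> Rbar_lt (Rabs y) (CV_radius hyp_coef).
Proof. intros Hy. eapply Rbar_lt_le_trans; [|apply CV_radius_hyp_coef]. exact Hy. Qed.

Lemma inv_pow_ode (y : R) : Rabs y < 1 ->
  (1 - y) * PSeries (PS_derive inv_pow_coef) y = INR (S n) * PSeries inv_pow_coef y.
Proof.
  intros Hy.
  assert (Hd : Rbar_lt (Rabs y) (CV_radius (PS_derive inv_pow_coef)))
    by (rewrite CV_radius_derive; now apply in_disk_inv_pow_coef).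
  pose proof (CV_radius_inside _ _ Hd) as Hex.
  rewrite Rmult_minus_distr_r, Rmult_1_l, <- PSeries_incr_1,
    <- (PSeries_minus _ _ _ Hex (ex_pseries_incr_1 _ _ Hex)), <- PSeries_scal.
  apply PSeries_ext. intros k. unfold PS_minus, PS_scal, PS_derive, PS_opp, PS_plus.
  cbn -[inv_pow_coef INR]. rewrite inv_pow_coef_S, S_INR.
  destruct k as [|k]; cbn [PS_incr_1].
  - unfold zero; simpl. ring.
  - ring.
Qed.

Lemma hyp_ode (y : R) : Rabs y < 1 ->
  2 * y * PSeries (PS_derive hyp_coef) y
  = (2 * INR n + 1) * (PSeries inv_pow_coef y - PSeries hyp_coef y).
Proof.
  intros Hy.
  pose proof (CV_radius_inside _ _ (in_disk_inv_pow_coef y Hy)) as Hex_ipc.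
  pose proof (CV_radius_inside _ _ (in_disk_hyp_coef y Hy)) as Hex_hyp.
  rewrite Rmult_assoc, <- PSeries_incr_1, <- (PSeries_minus _ _ _ Hex_ipc Hex_hyp),
    <- !PSeries_scal.
  apply PSeries_ext. intros k. unfold PS_minus, PS_scal, PS_opp, PS_plus.
  cbn -[inv_pow_coef hyp_coef INR].
  replace (PS_incr_1 (PS_derive hyp_coef) k) with (INR k * hyp_coef k : R)
    by (destruct k; [simpl; unfold zero; simpl; ring | reflexivity]).
  unfold hyp_coef. pose proof (pos_INR n). pose proof (pos_INR k). field. lra.
Qed.

End Hypergeometric.

Lemma is_derive_PSeries_inv_pow_coef_mul (n : nat) (x : R) : -1 < x < 1 ->
  is_derive (fun y => PSeries (inv_pow_coef n) y * (1 - y) ^ S n) x 0.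
Proof.
  intros Hx. assert (Hxa : Rabs x < 1) by (apply Rabs_def1; lra).
  assert (Hpow : is_derive (fun y => (1 - y) ^ S n) x (- INR (S n) * (1 - x) ^ n)).
  { auto_derive; [exact I|]. rewrite S_INR.
    replace (match n with 0%nat => 1 | S _ => INR n + 1 end) with (INR n + 1)
      by (destruct n; simpl; ring).
    replace (1 + - x) with (1 - x) by ring. ring. }
  replace 0 with (PSeries (PS_derive (inv_pow_coef n)) x * (1 - x) ^ S n
                  + PSeries (inv_pow_coef n) x * (- INR (S n) * (1 - x) ^ n)).
  - apply (is_derive_mult (PSeries (inv_pow_coef n)) (fun y => (1 - y) ^ S n));
      [|exact Hpow|intros; apply Rmult_comm].
    apply is_derive_PSeries. now apply in_disk_inv_pow_coef.
  - transitivity ((1 - x) ^ n * ((1 - x) * PSeries (PS_derive (inv_pow_coef n)) x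
                                  - INR (S n) * PSeries (inv_pow_coef n) x)).
    + simpl pow. ring.
    + rewrite inv_pow_ode by exact Hxa. ring.
Qed.

Lemma PSeries_inv_pow_coef (n : nat) (y : R) : -1 < y < 1 ->
  PSeries (inv_pow_coef n) y = / (1 - y) ^ S n.
Proof.
  intros Hy.
  pose proof (is_derive_zero_const _ (-1) 1 (is_derive_PSeries_inv_pow_coef_mul n) y 0 Hy
                ltac:(lra)) as Hconst.
  cbv beta in Hconst. rewrite PSeries_0, Rminus_0_r, pow1, Rmult_1_r in Hconst.
  replace (inv_pow_coef n 0) with 1 in Hconst by (unfold inv_pow_coef; simpl; field).
  assert (0 < (1 - y) ^ S n) by (apply pow_lt; lra).
  apply (Rmult_eq_reg_r ((1 - y) ^ S n)); [|lra].
  rewrite Hconst. field. lra.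
Qed.

Lemma is_derive_PSeries_hyp_coef_neg_sq_sub_Q (n : nat) (x : R) : -1 < x < 1 ->
  is_derive (fun s => s ^ (2 * n + 1) * PSeries (hyp_coef n) (- s ^ 2) - (2 * INR n + 1) * Q n s)
    x 0.
Proof.
  intros Hx.
  assert (Hy : -1 < - x ^ 2 < 1) by (simpl; split; nra).
  assert (Hya : Rabs (- x ^ 2) < 1) by (apply Rabs_def1; lra).
  assert (DF : is_derive (fun s => PSeries (hyp_coef n) (- s ^ 2)) x
                 (- (2 * x) * PSeries (PS_derive (hyp_coef n)) (- x ^ 2))).
  { apply (is_derive_comp (PSeries (hyp_coef n)) (fun s => - s ^ 2)).
    - apply is_derive_PSeries. now apply in_disk_hyp_coef.
    - auto_derive; [exact I | ring]. }
  assert (Dpow : is_derive (fun s => s ^ (2 * n + 1)) x (INR (2 * n + 1) * x ^ (2 * n))).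
  { auto_derive; [exact I|].
    replace (n + (n + 0) + 1)%nat with (2 * n + 1)%nat by lia.
    replace (Init.Nat.pred (2 * n + 1)) with (2 * n)%nat by lia. ring. }
  pose proof (is_derive_minus _ _ x _ _
    (is_derive_mult _ _ x _ _ Dpow DF Rmult_comm)
    (is_derive_scal _ x (2 * INR n + 1) _ (is_derive_Q n x))) as D.
  replace 0 with (INR (2 * n + 1) * x ^ (2 * n) * PSeries (hyp_coef n) (- x ^ 2)
    + x ^ (2 * n + 1) * (- (2 * x) * PSeries (PS_derive (hyp_coef n)) (- x ^ 2))
    - (2 * INR n + 1) * (x ^ (2 * n) / (1 + x ^ 2) ^ S n)); [exact D|].
  pose proof (hyp_ode n _ Hya) as Hode.
  rewrite (PSeries_inv_pow_coef n _ Hy) in Hode.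
  replace (1 - - x ^ 2) with (1 + x ^ 2) in Hode by ring.
  assert (0 < (1 + x ^ 2) ^ S n) by (apply pow_lt; nra).
  rewrite pow_add, plus_INR, mult_INR. simpl (INR 2). simpl (INR 1).
  transitivity (x ^ (2 * n) * ((2 * INR n + 1) * PSeries (hyp_coef n) (- x ^ 2)
                  + 2 * - x ^ 2 * PSeries (PS_derive (hyp_coef n)) (- x ^ 2)
                  - (2 * INR n + 1) / (1 + x ^ 2) ^ S n)).
  - field. lra.
  - rewrite Hode. field. lra.
Qed.

Lemma PSeries_hyp_coef_neg_sq (n : nat) (s : R) : 0 < s < 1 ->
  s ^ (2 * n + 1) * PSeries (hyp_coef n) (- s ^ 2) = (2 * INR n + 1) * Q n s.
Proof.
  intros Hs.
  pose proof (is_derive_zero_const _ (-1) 1 (is_derive_PSeries_hyp_coef_neg_sq_sub_Q n) s 0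
                ltac:(lra) ltac:(lra)) as Hconst.
  cbv beta in Hconst. rewrite Q_at_0, pow_i in Hconst by lia. lra.
Qed.

(** * Passing to the limit at -1 *)

Lemma trig_sum_eq_im_sum (n : nat) :
  sum_n_m (fun k => (-1) ^ k * Binomial.C (2 * n - k) n * Rpower 2 (INR k / 2) / INR k
                    * sin (3 * INR k * PI / 4)) 1 n = im_sum n.
Proof.
  unfold im_sum, bsum. replace (2 * n - n)%nat with n by lia.
  rewrite (sum_Sn_m _ 0 n) by lia.
  unfold zim at 1, plus; simpl. rewrite Rdiv_0_l, Rmult_0_r, Rplus_0_l.
  apply sum_n_m_ext_R. intros k _. rewrite <- (proj2 (zpow_polar k)). unfold Rdiv. ring.
Qed.

Lemma corollary_rhs_eq_Q (n : nat) :
  INR (dfact (2 * n + 1)) / INR (dfact (2 * n)) * (PI / 4)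
  + (2 * INR n + 1) / 2 ^ (2 * n)
    * sum_n_m (fun k => (-1) ^ k * Binomial.C (2 * n - k) n
                         * Rpower 2 (INR k / 2) / INR k
                         * sin (3 * INR k * PI / 4)) 1 n
  = (2 * INR n + 1) * Q n 1.
Proof.
  rewrite trig_sum_eq_im_sum, Q_at_1, pow_mult.
  replace (2 ^ 2) with 4 by ring.
  unfold dfact_ratio. unfold Rdiv. ring.
Qed.

Lemma hyp2F1_series_eq_Q_sqrt (n : nat) (x : R) : -1 < x < 0 ->
  hyp2F1_series (INR n + /2) (INR n + 1) (INR n + 3/2) x
  = (2 * INR n + 1) * Q n (sqrt (- x)) / sqrt (- x) ^ (2 * n + 1).
Proof.
  intros Hx.
  assert (Hs0 : 0 < sqrt (- x)) by (apply sqrt_lt_R0; lra).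
  assert (Hs2 : sqrt (- x) ^ 2 = - x) by (apply pow2_sqrt; lra).
  assert (Hs1 : sqrt (- x) < 1) by nra.
  rewrite hyp2F1_series_hyp_coef, <- PSeries_hyp_coef_neg_sq by lra.
  rewrite Hs2, Ropp_involutive. field. apply pow_nonzero. lra.
Qed.

Lemma continuous_Q_sqrt (n : nat) :
  continuous (fun x => (2 * INR n + 1) * Q n (sqrt (- x)) / sqrt (- x) ^ (2 * n + 1)) (-1).
Proof.
  apply (@ex_derive_continuous R_AbsRing R_NormedModule).
  assert (HQ : forall z, ex_derive (Q n) z) by (intros z; eexists; apply is_derive_Q).
  auto_derive. repeat split; auto; try lra.
  apply pow_nonzero, Rgt_not_eq, sqrt_lt_R0. lra.
Qed.

Theorem corollary4p1 (n : nat) :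
  filterlim
    (fun x => hyp2F1_series (INR n + /2) (INR n + 1) (INR n + 3/2) x)
    (at_right (-1))
    (locally
       (INR (dfact (2 * n + 1)) / INR (dfact (2 * n)) * (PI / 4)
        + (2 * INR n + 1) / 2 ^ (2 * n)
          * sum_n_m (fun k => (-1) ^ k * Binomial.C (2 * n - k) n
                               * Rpower 2 (INR k / 2) / INR k
                               * sin (3 * INR k * PI / 4)) 1 n)).
Proof.
  set (G x := (2 * INR n + 1) * Q n (sqrt (- x)) / sqrt (- x) ^ (2 * n + 1)).
  assert (HG : G (-1) = (2 * INR n + 1) * Q n 1).
  { unfold G. replace (- -1) with 1 by ring. rewrite sqrt_1, pow1. field. }
  rewrite corollary_rhs_eq_Q, <- HG.
  apply (filterlim_ext_loc G).
  - exists (mkposreal 1 Rlt_0_1). intros x Hx Hx1.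
    assert (Hball : Rabs (x - -1) < 1) by exact Hx.
    apply Rabs_def2 in Hball.
    symmetry. apply hyp2F1_series_eq_Q_sqrt. lra.
  - apply (filterlim_filter_le_1 (F := locally (-1))); [apply filter_le_within|].
    apply continuous_Q_sqrt.
Qed.
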